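(* Let $(M,d)$ be a pointed metric space. The space $\mathrm{Lip}_0(M)$ has the LD2P if and only if for every optimal $\mu\in ba(\widetilde M)$ with $\|\mu\|=1$ and every $\gamma\in(0,1)$ there exist $A\subseteq\widetilde M$ with $\mu(A)\ge\gamma$, functions $f,g\in B_{\mathrm{Lip}_0(M)}$, and $u,v\in M$ with $u\ne v$ such that $f(m_{x,y})\ge\gamma$ and $g(m_{x,y})\ge\gamma$ for all $(x,y)\in A$, and for all $x,y\in\pi(A)$, \[\max\{f(x)-f(y),\,g(y)-g(x)\}+\gamma d(u,v)\le d(x,u)+d(y,v).\]
   Context: $M$ has base point $0$; $\mathrm{Lip}_0(M)$ is the real Banach space of Lipschitz $f\colon M\to\mathbb R$ with $f(0)=0$, normed by the best Lipschitz constant, with unit ball $B_{\mathrm{Lip}_0(M)}$. A Banach space $X$ has the LD2P (local diameter 2 property) if every slice $\{x\in B_X: x^*(x)>1-\alpha\}$ ($\|x^*\|=1$, $\alpha>0$) of its unit ball has diameter $2$. $\widetilde M=\{(x,y)\in M\times M:x\ne y\}$, $f(m_{x,y})=(f(x)-f(y))/d(x,y)$, and $\pi(A)=\{x\in M:\exists y,\ (x,y)\in A\text{ or }(y,x)\in A\}$. $ba(\widetilde M)$ is the Banach space of bounded finitely additive signed measures on the power set of $\widetilde M$ with norm $|\mu|(\widetilde M)$. $\Phi f(x,y)=(f(x)-f(y))/d(x,y)$ and $(\Phi^*\mu)(f)=\int_{\widetilde M}\Phi f\,d\mu$. $\mu$ is optimal if positive and $\|\Phi^*\mu\|=\|\mu\|$.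 *)

From HB Require Import structures.
From mathcomp Require Import all_boot all_order all_algebra.
From mathcomp Require Import all_classical all_reals.
Set Implicit Arguments. Unset Strict Implicit. Unset Printing Implicit Defensive.
Import Order.TTheory GRing.Theory Num.Theory.
Local Open Scope classical_set_scope.
Local Open Scope ring_scope.

Section Defs.
Variables (R : realType) (M : Type) (d : M -> M -> R) (z : M).

Definition is_metric : Prop :=
  (forall x y, 0 <= d x y) /\ (forall x y, d x y = 0 <-> x = y) /\
  (forall x y, d x y = d y x) /\ (forall x y w, d x w <= d x y + d y w).

Definition lipnorm (f : M -> R) : R :=
  sup [set r | exists x y, x <> y /\ r = `|f x - f y| / d x y].

Definition Lip0 (f : M -> R) : Prop :=
  f z = 0 /\ exists L : R, forall x y, `|f x - f y| <= L * d x y.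

Definition BLip0 (f : M -> R) : Prop := Lip0 f /\ lipnorm f <= 1.

Definition is_dual (phi : (M -> R) -> R) : Prop :=
  (forall f g a b, Lip0 f -> Lip0 g ->
     phi (fun x => a * f x + b * g x) = a * phi f + b * phi g) /\
  exists C : R, forall f, Lip0 f -> `|phi f| <= C * lipnorm f.

Definition dualnorm (phi : (M -> R) -> R) : R :=
  sup [set `|phi f| | f in BLip0].

Definition slice (phi : (M -> R) -> R) (alpha : R) : set (M -> R) :=
  [set f | BLip0 f /\ 1 - alpha < phi f].

Definition diam_Lip (S : set (M -> R)) : R :=
  sup [set r | exists f g, S f /\ S g /\ r = lipnorm (fun x => f x - g x)].

Definition LD2P : Prop :=
  forall phi, is_dual phi -> dualnorm phi = 1 ->
  forall alpha : R, 0 < alpha -> diam_Lip (slice phi alpha) = 2.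

Definition Mt := {p : M * M | p.1 <> p.2}.

Definition Phi (f : M -> R) (p : Mt) : R :=
  (f (sval p).1 - f (sval p).2) / d (sval p).1 (sval p).2.

Definition pi_set (A : set Mt) : set M :=
  [set x | exists y, exists2 p, A p & (sval p = (x, y) \/ sval p = (y, x))].

Definition is_ba (mu : set Mt -> R) : Prop :=
  (forall A B, A `&` B = set0 -> mu (A `|` B) = mu A + mu B) /\
  exists C : R, forall A, `|mu A| <= C.

Definition positive_ba (mu : set Mt -> R) : Prop := forall A, 0 <= mu A.

(* s is a finite partition of Mt (empty cells allowed) *)
Definition fin_partition (s : seq (set Mt)) : Prop :=
  (forall i j, (i < size s)%N -> (j < size s)%N -> i <> j ->
     nth set0 s i `&` nth set0 s j = set0) /\
  (forall p, exists i, (i < size s)%N /\ nth set0 s i p).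

Definition ba_norm (mu : set Mt -> R) : R :=
  sup [set \sum_(A <- s) `|mu A| | s in fin_partition].

(* I is the integral of the bounded function g w.r.t. mu: limit of
   Riemann sums over tagged finite partitions of small oscillation.
   v i = g(t_i) for a tag t_i in the i-th cell (arbitrary if the cell is empty,
   where mu vanishes). *)
Definition is_ba_integral (mu : set Mt -> R) (g : Mt -> R) (I : R) : Prop :=
  forall e : R, 0 < e -> exists2 delta : R, 0 < delta &
  forall (s : seq (set Mt)) (v : seq R),
    fin_partition s -> size v = size s ->
    (forall i, (i < size s)%N -> forall p q, nth set0 s i p -> nth set0 s i q ->
        `|g p - g q| <= delta) ->
    (forall i, (i < size s)%N ->
        nth set0 s i = set0 \/ exists2 p, nth set0 s i p & nth 0 v i = g p) ->
    `|\sum_(i < size s) nth 0 v i * mu (nth set0 s i) - I| <= e.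

Definition ba_integral (mu : set Mt -> R) (g : Mt -> R) : R :=
  xget 0 [set I | is_ba_integral mu g I].

Definition Phi_star (mu : set Mt -> R) : (M -> R) -> R :=
  fun f => ba_integral mu (Phi f).

Definition optimal (mu : set Mt -> R) : Prop :=
  positive_ba mu /\ dualnorm (Phi_star mu) = ba_norm mu.

End Defs.

(** Positive finitely additive measures on pairs represent the norming functionals
    of Lip_0(M): for a positive mu, integrating Phi f against mu is a functional of
    norm at most mu(M~); conversely, a norm-one phi, transported to {Phi f} inside the
    bounded functions on M~ and extended by Hahn-Banach under the sup seminorm, is
    integration against the optimal measure B |-> psi(1_B).
    (=>) Two elements of a thin slice of Phi^* mu at distance > 1 + gamma increase and
    decrease by at least gamma d(u,v) along some pair (u,v); by a Chebyshev bound both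
    have slopes >= gamma on a set A of measure >= gamma, and the inequality on pi(A)
    is the triangle inequality.
    (<=) For a norm-one phi take its representing measure and a witness for gamma
    close to 1; McShane-type extensions of f and -g from pi(A) keep their slopes on A,
    so they lie in the slice, and their difference has slope >= 2 gamma at (u,v). *)

From mathcomp Require Import all_boot all_order all_algebra.
From mathcomp Require Import all_classical all_reals numfun.
From mathcomp Require Import ring lra zify.
Import Order.TTheory GRing.Theory Num.Theory.
Local Open Scope classical_set_scope.
Local Open Scope ring_scope.
Set Implicit Arguments. Unset Strict Implicit. Unset Printing Implicit Defensive.

Lemma ler_addgt0Pr_scaled (R : realType) (x y K : R) : 0 <= K ->
  (forall e, 0 < e -> x <= y + e * K) -> x <= y.
Proof.
move=> K0 h; apply/ler_addgt0Pr => e e0.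
have K1 : 0 < K + 1 by lra.
apply: (le_trans (h _ (divr_gt0 e0 K1))); rewrite lerD2l mulrAC ler_pdivrMr //.
nra.
Qed.

Lemma eq0_norm_le_scaled (R : realType) (x K : R) : 0 <= K ->
  (forall e, 0 < e -> `|x| <= e * K) -> x = 0.
Proof.
move=> K0 h; apply/eqP; rewrite -normr_le0.
by apply: (ler_addgt0Pr_scaled K0) => e /h; rewrite add0r.
Qed.

Lemma sup_eq_approx (R : realType) (D : set R) (c : R) : ubound D c ->
  (forall e, 0 < e -> exists2 r, D r & c - e <= r) -> sup D = c.
Proof.
move=> Dc Dapprox; have [r Dr _] := Dapprox 1 ltr01.
apply/eqP; rewrite eq_le ge_sup //=; last by exists r.
apply/ler_addgt0Pr => e /Dapprox [r' Dr' le_r'].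
by have := ub_le_sup (ex_intro _ c Dc) Dr'; lra.
Qed.

Section Partitions.
Variables (R : realType) (T : Type).
Implicit Types (g h : T -> R) (P Q : nat -> set T) (n m : nat).

Definition bounded g := exists K, forall p, `|g p| <= K.

Definition is_partition n P :=
  (forall i j, (i < n)%N -> (j < n)%N -> i <> j -> P i `&` P j = set0) /\
  (forall p, exists i, (i < n)%N /\ P i p).

Definition osc_le g (e : R) n P :=
  forall i, (i < n)%N -> forall p q, P i p -> P i q -> `|g p - g q| <= e.

Definition is_tagging g n P (V : nat -> R) :=
  forall i, (i < n)%N -> P i = set0 \/ exists2 p, P i p & V i = g p.

Definition riemann_sum (mu : set T -> R) n P (V : nat -> R) :=
  \sum_(i < n) V i * mu (P i).

Lemma bounded_cst (c : R) : bounded (fun _ => c).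
Proof. by exists `|c|. Qed.

Lemma bounded_indic (B : set T) : bounded \1_B.
Proof. by exists 1 => p; rewrite indicE; case: (_ \in _); rewrite ?normr1 ?normr0. Qed.

Lemma bounded_lincomb (a b : R) g h : bounded g -> bounded h ->
  bounded (fun p => a * g p + b * h p).
Proof.
move=> [K1 h1] [K2 h2]; exists (`|a| * K1 + `|b| * K2) => p.
apply: (le_trans (ler_normD _ _)); rewrite !normrM.
by apply: lerD; apply: ler_wpM2l.
Qed.

Lemma preimage_partition n (idx : T -> nat) : (forall p, (idx p < n)%N) ->
  is_partition n (fun i => [set p | idx p = i]).
Proof.
move=> idx_lt; split; last by move=> p; exists (idx p).
move=> i j _ _ ij; apply/seteqP; split => // p [/= pi pj].
by apply: ij; rewrite -pi -pj.
Qed.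

Lemma level_index g (e : R) : bounded g -> 0 < e ->
  exists n (idx : T -> nat), (forall p, (idx p < n)%N) /\
    forall p q, idx p = idx q -> `|g p - g q| <= e.
Proof.
move=> [K hK] e0; pose c := `|K|.
have gc p : - c <= g p <= c by rewrite -ler_norml; exact: le_trans (hK p) (ler_norm K).
pose level p := Num.truncn ((g p + c) / e).
have level_ge0 p : 0 <= (g p + c) / e.
  by apply: divr_ge0; [have := gc p; lra | exact: ltW].
exists (Num.truncn (2 * c / e)).+1, level; split.
  move=> p; rewrite ltnS; apply: le_truncn.
  by rewrite ler_pM2r ?invr_gt0 //; have := gc p; lra.
move=> p q lpq.
have := truncn_itv (level_ge0 p); rewrite -/(level p) lpq => /andP[p1 p2].
have /andP[q1 q2] := truncn_itv (level_ge0 q).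
have lvl1 : `|(g p + c) / e - (g q + c) / e| <= 1.
  by rewrite ler_norml; apply/andP; split; rewrite -natr1 in p2 q2; lra.
have -> : g p - g q = ((g p + c) / e - (g q + c) / e) * e.
  by field; rewrite gt_eqF.
by rewrite normrM (gtr0_norm e0) -[leRHS]mul1r; apply: ler_wpM2r => //; exact: ltW.
Qed.

Lemma common_level_partition g h (e : R) : bounded g -> bounded h -> 0 < e ->
  exists n P, [/\ is_partition n P, osc_le g e n P & osc_le h e n P].
Proof.
move=> bg bh e0.
have [n [ig [ig_lt igP]]] := level_index bg e0.
have [m [ih [ih_lt ihP]]] := level_index bh e0.
pose idx p := (ig p * m + ih p)%N.
have m0 (p : T) : (0 < m)%N by have := ih_lt p; lia.
have idx_div p : (idx p %/ m = ig p)%N by rewrite divnMDl ?(m0 p) // divn_small // addn0.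
have idx_mod p : (idx p %% m = ih p)%N by rewrite modnMDl modn_small.
exists (n * m)%N, (fun i => [set p | idx p = i]); split.
- by apply: preimage_partition => p; rewrite /idx; have := ig_lt p; have := ih_lt p; nia.
- by move=> i _ p q /= pi qi; apply: igP; rewrite -idx_div -idx_div pi qi.
- by move=> i _ p q /= pi qi; apply: ihP; rewrite -idx_mod -idx_mod pi qi.
Qed.

Lemma level_partition g (e : R) : bounded g -> 0 < e ->
  exists n P, is_partition n P /\ osc_le g e n P.
Proof. by move=> bg e0; have [n [P [? ? _]]] := common_level_partition bg bg e0; exists n, P. Qed.

Definition cell_point P i : option T :=
  if pselect (exists p, P i p) is left e then Some (projT1 (cid e)) else None.

Lemma cell_pointP P i :
  (exists2 p, cell_point P i = Some p & P i p) \/ (cell_point P i = None /\ P i = set0).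
Proof.
rewrite /cell_point; case: pselect => [e|ne]; first by left; exists (projT1 (cid e)) => //; case: cid.
by right; split => //; apply/seteqP; split => // p Pp; apply: ne; exists p.
Qed.

Definition tag_of g P i := oapp g 0 (cell_point P i).

Lemma tag_of_tagging g n P : is_tagging g n P (tag_of g P).
Proof.
move=> i _; rewrite /tag_of.
by case: (cell_pointP P i) => [[p -> Pp] | [-> ->]]; [right; exists p | left].
Qed.

Lemma tag_of_lincomb (a b : R) g h P i :
  tag_of (fun p => a * g p + b * h p) P i = a * tag_of g P i + b * tag_of h P i.
Proof. by rewrite /tag_of; case: cell_point => [p|] /=; rewrite ?mulr0 ?addr0. Qed.

Lemma tag_of_near g (e : R) n P i p : osc_le g e n P -> (i < n)%N -> P i p ->
  `|g p - tag_of g P i| <= e.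
Proof.
move=> osc i_lt Pp; rewrite /tag_of.
case: (cell_pointP P i) => [[q -> Pq] | [_ P0]] /=; first exact: (osc i).
by move: Pp; rewrite P0.
Qed.

Definition bipartition (B : set T) i := if i == 0%N then B else ~` B.

Lemma bipartition_partition B : is_partition 2 (bipartition B).
Proof.
split; last by move=> p; case: (pselect (B p)) => Bp; [exists 0%N | exists 1%N].
by move=> [|[|i]] [|[|j]] //= _ _ _; rewrite /bipartition /= ?setICr ?setICl.
Qed.

End Partitions.

Arguments bounded_cst {R T} c.
Arguments bounded_indic {R T} B.
Arguments tag_of_tagging {R T} g n P.

Section FinitelyAdditive.
Variables (R : realType) (M : Type).
Local Notation T := (Mt M).
Implicit Types (mu : set T -> R) (g h : T -> R) (P Q : nat -> set T) (n m : nat).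

Definition pos_ba mu := is_ba mu /\ positive_ba mu.

Lemma ba_set0 mu : is_ba mu -> mu set0 = 0.
Proof.
move=> [mu_add _]; apply: (addrI (mu set0)).
by rewrite addr0 -mu_add ?setI0 // setU0.
Qed.

Lemma ba_setC mu B : is_ba mu -> mu B + mu (~` B) = mu setT.
Proof. by move=> [mu_add _]; rewrite -mu_add ?setICr // setUCr. Qed.

Lemma ba_sum_disjoint mu n Q : is_ba mu ->
  (forall i j, (i < n)%N -> (j < n)%N -> i <> j -> Q i `&` Q j = set0) ->
  mu [set p | exists i, (i < n)%N /\ Q i p] = \sum_(i < n) mu (Q i).
Proof.
move=> hba; elim: n => [|n IH] Qdisj.
  by rewrite big_ord0 -(ba_set0 hba); congr mu; apply/seteqP; split => // p [? []].
rewrite big_ord_recr /= -IH; last by move=> i j /ltnW ? /ltnW; exact: Qdisj.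
have -> : [set p | exists i, (i < n.+1)%N /\ Q i p] =
          [set p | exists i, (i < n)%N /\ Q i p] `|` Q n.
  apply/seteqP; split => p.
    case=> i [+ Qp]; rewrite ltnS leq_eqVlt => /orP[/eqP ei | i_lt].
      by right; rewrite -ei.
    by left; exists i.
  by case=> [[i [/ltnW i_lt Qp]] | Qp]; [exists i | exists n].
apply: hba.1; apply/seteqP; split => // p [[i [i_lt Qp]] Qnp].
have i_neq : i <> n by move=> ei; move: i_lt; rewrite ei ltnn.
have := Qdisj i n (ltnW i_lt) (ltnSn n) i_neq.
by move/seteqP => [/(_ p (conj Qp Qnp))].
Qed.

Lemma ba_partition_sum mu n P B : is_ba mu -> is_partition n P ->
  mu B = \sum_(i < n) mu (B `&` P i).
Proof.
move=> hba [Pdisj Pcover].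
rewrite -(@ba_sum_disjoint mu n (fun i => B `&` P i) hba); last first.
  move=> i j i_lt j_lt ij; apply/seteqP; split => // p [[_ Pip] [_ Pjp]].
  by have /seteqP[/(_ p (conj Pip Pjp))] := Pdisj i j i_lt j_lt ij.
congr mu; apply/seteqP; split => [p Bp | p [i [_ []]]] //.
by have [i [i_lt Pip]] := Pcover p; exists i.
Qed.

Lemma pos_ba_le mu A B : pos_ba mu -> A `<=` B -> mu A <= mu B.
Proof.
move=> [[mu_add _] mu_ge0] AB.
have -> : B = A `|` (B `\` A).
  by apply/seteqP; split => [p Bp | p [/AB | []]] //; case: (pselect (A p)); [left | right].
by rewrite mu_add ?lerDl ?mu_ge0 //; apply/seteqP; split => // p [? []].
Qed.

Lemma pos_ba_subadditive mu A B : pos_ba mu -> mu (A `|` B) <= mu A + mu B.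
Proof.
move=> hmu; have -> : A `|` B = A `|` (B `\` A).
  apply/seteqP; split => p [Ap | Bp]; [by left | | by left | by right; case: Bp].
  by case: (pselect (A p)) => Ap; [left | right].
rewrite hmu.1.1; last by apply/seteqP; split => // p [? []].
by rewrite lerD2l; apply: pos_ba_le => // p [].
Qed.

Lemma ba_norm_pos_ba mu : pos_ba mu -> ba_norm mu = mu setT.
Proof.
move=> [hba mu_ge0]; rewrite /ba_norm.
suff -> : [set \sum_(A <- s) `|mu A| | s in @fin_partition M] = [set mu setT] by rewrite sup1.
apply/seteqP; split => [x [s s_part <-] | x ->].
  rewrite /= (ba_partition_sum setT hba s_part) (big_nth set0) big_mkord.
  by apply: eq_bigr => i _; rewrite setTI ger0_norm.
exists [:: setT]; last by rewrite big_seq1 ger0_norm.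
by split; [move=> [|i] [|j] | move=> p; exists 0%N].
Qed.

Lemma riemann_sum_dist mu g (e1 e2 : R) n P V m Q W : pos_ba mu ->
  is_partition n P -> osc_le g e1 n P -> is_tagging g n P V ->
  is_partition m Q -> osc_le g e2 m Q -> is_tagging g m Q W ->
  `|riemann_sum mu n P V - riemann_sum mu m Q W| <= (e1 + e2) * mu setT.
Proof.
move=> [hba mu_ge0] Ppart Posc Ptag Qpart Qosc Qtag.
have RP : riemann_sum mu n P V = \sum_(i < n) \sum_(j < m) V i * mu (P i `&` Q j).
  by apply: eq_bigr => i _; rewrite (ba_partition_sum _ hba Qpart) mulr_sumr.
have RQ : riemann_sum mu m Q W = \sum_(i < n) \sum_(j < m) W j * mu (P i `&` Q j).
  rewrite exchange_big; apply: eq_bigr => j _.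
  rewrite (ba_partition_sum _ hba Ppart) mulr_sumr; apply: eq_bigr => i _.
  by rewrite setIC.
have muT : mu setT = \sum_(i < n) \sum_(j < m) mu (P i `&` Q j).
  rewrite (ba_partition_sum _ hba Ppart); apply: eq_bigr => i _.
  by rewrite setTI (ba_partition_sum _ hba Qpart).
rewrite RP RQ muT -sumrB mulr_sumr.
apply: (le_trans (ler_norm_sum _ _ _)); apply: ler_sum => i _.
rewrite -sumrB mulr_sumr; apply: (le_trans (ler_norm_sum _ _ _)); apply: ler_sum => j _.
rewrite -mulrBl normrM (ger0_norm (mu_ge0 _)).
case: (pselect (exists p, (P i `&` Q j) p)) => [[p [Pp Qp]] | empty]; last first.
  have -> : P i `&` Q j = set0 by apply/seteqP; split => // p PQp; apply: empty; exists p.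
  by rewrite ba_set0 // !mulr0.
apply: ler_wpM2r => //.
have [P0 | [p1 Pp1 ->]] := Ptag i (ltn_ord i); first by move: Pp; rewrite P0.
have [Q0 | [q1 Qq1 ->]] := Qtag j (ltn_ord j); first by move: Qp; rewrite Q0.
have := Posc i (ltn_ord i) _ _ Pp1 Pp; have := Qosc j (ltn_ord j) _ _ Qq1 Qp.
have := ler_normD (g p1 - g p) (g p - g q1); rewrite (distrC (g q1)).
have -> : g p1 - g p + (g p - g q1) = g p1 - g q1 by ring.
lra.
Qed.

(* Every Riemann sum over a partition on whose cells g oscillates by at most e is
   within e mu(M~) of this sup (ba_int_riemann). *)
Definition ba_int mu g := sup [set x | exists e n P V, [/\ 0 <= e, is_partition n P,
  osc_le g e n P, is_tagging g n P V & x = riemann_sum mu n P V - e * mu setT]].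

Lemma ba_int_riemann mu g (e : R) n P V : pos_ba mu -> 0 <= e ->
  is_partition n P -> osc_le g e n P -> is_tagging g n P V ->
  `|ba_int mu g - riemann_sum mu n P V| <= e * mu setT.
Proof.
move=> hmu e0 Ppart Posc Ptag; rewrite /ba_int.
set S := riemann_sum mu n P V.
set E := (X in sup X).
have ubE : ubound E (S + e * mu setT).
  move=> _ [e' [m [Q [W [e'0 Qpart Qosc Qtag ->]]]]].
  have := riemann_sum_dist hmu Qpart Qosc Qtag Ppart Posc Ptag.
  by rewrite -/S mulrDl ler_norml => /andP[_]; lra.
have inE : E (S - e * mu setT) by exists e, n, P, V.
have sup_le : sup E <= S + e * mu setT by apply: ge_sup; first exists (S - e * mu setT).
have le_sup : S - e * mu setT <= sup E by apply: ub_le_sup; first exists (S + e * mu setT).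
by rewrite ler_norml; apply/andP; split; lra.
Qed.

Lemma ba_int_lincomb mu (a b : R) g h : pos_ba mu -> bounded g -> bounded h ->
  ba_int mu (fun p => a * g p + b * h p) = a * ba_int mu g + b * ba_int mu h.
Proof.
move=> hmu bg bh; have muT0 : 0 <= mu setT := hmu.2 setT.
set k := fun p => a * g p + b * h p.
apply/eqP; rewrite -subr_eq0; apply/eqP.
apply: (@eq0_norm_le_scaled _ _ (2 * (`|a| + `|b|) * mu setT)) => [|e e0].
  by rewrite !mulr_ge0 ?addr_ge0.
have [n [P [Ppart Pg Ph]]] := common_level_partition bg bh e0.
have Pk : osc_le k ((`|a| + `|b|) * e) n P.
  move=> i i_lt p q Pp Pq; rewrite /k.
  have -> : a * g p + b * h p - (a * g q + b * h q) = a * (g p - g q) + b * (h p - h q) by ring.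
  apply: (le_trans (ler_normD _ _)); rewrite !normrM mulrDl.
  by apply: lerD; [apply: ler_wpM2l => //; exact: (Pg i) | apply: ler_wpM2l => //; exact: (Ph i)].
have approx f ef : 0 <= ef -> osc_le f ef n P ->
    `|ba_int mu f - riemann_sum mu n P (tag_of f P)| <= ef * mu setT.
  by move=> ef0 Pf; exact: ba_int_riemann hmu ef0 Ppart Pf (tag_of_tagging f n P).
have Ak := approx k _ (mulr_ge0 (addr_ge0 (normr_ge0 a) (normr_ge0 b)) (ltW e0)) Pk.
have Ag := approx g _ (ltW e0) Pg; have Ah := approx h _ (ltW e0) Ph.
have RSk : riemann_sum mu n P (tag_of k P) =
    a * riemann_sum mu n P (tag_of g P) + b * riemann_sum mu n P (tag_of h P).
  rewrite /riemann_sum !mulr_sumr -big_split; apply: eq_bigr => i _.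
  by rewrite tag_of_lincomb mulrDl !mulrA.
rewrite (_ : _ - _ = (ba_int mu k - riemann_sum mu n P (tag_of k P))
    - a * (ba_int mu g - riemann_sum mu n P (tag_of g P))
    - b * (ba_int mu h - riemann_sum mu n P (tag_of h P))); last by rewrite RSk; ring.
apply: (le_trans (ler_normB _ _)); apply: (le_trans (lerD (ler_normB _ _) (lexx _))).
rewrite !normrM.
have := ler_wpM2l (normr_ge0 a) Ag; have := ler_wpM2l (normr_ge0 b) Ah.
nra.
Qed.

Lemma ba_int_ge0 mu g : pos_ba mu -> bounded g -> (forall p, 0 <= g p) -> 0 <= ba_int mu g.
Proof.
move=> hmu bg g0; rewrite -[0]add0r.
apply: (@ler_addgt0Pr_scaled _ _ _ (mu setT)) => [|e e0]; first exact: hmu.2.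
have [n [P [Ppart Posc]]] := level_partition bg e0.
have := ba_int_riemann hmu (ltW e0) Ppart Posc (tag_of_tagging g n P).
have : 0 <= riemann_sum mu n P (tag_of g P).
  apply: sumr_ge0 => i _; apply: mulr_ge0; last exact: hmu.2.
  by rewrite /tag_of; case: cell_point.
by rewrite ler_norml => + /andP[]; lra.
Qed.

Lemma ba_int_le mu g h : pos_ba mu -> bounded g -> bounded h ->
  (forall p, g p <= h p) -> ba_int mu g <= ba_int mu h.
Proof.
move=> hmu bg bh gh.
have hg p : 0 <= 1 * h p + -1 * g p by have := gh p; lra.
have := ba_int_ge0 hmu (bounded_lincomb 1 (-1) bh bg) hg.
by rewrite ba_int_lincomb //; lra.
Qed.

Lemma ba_int_indic mu B : pos_ba mu -> ba_int mu \1_B = mu B.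
Proof.
move=> hmu; have Bpart := bipartition_partition B.
have Bosc : osc_le (\1_B : T -> R) 0 2 (bipartition B).
  move=> i i_lt p q; case: i i_lt => [|[|//]] _; rewrite /bipartition /= => Bp Bq.
    by rewrite !indicE !mem_set // subrr normr0.
  by rewrite !indicE !memNset // subrr normr0.
have := ba_int_riemann hmu (lexx 0) Bpart Bosc (tag_of_tagging _ 2 _).
suff -> : riemann_sum mu 2 (bipartition B) (tag_of \1_B (bipartition B)) = mu B.
  by rewrite mul0r normr_le0 subr_eq0 => /eqP.
have cell i : tag_of \1_B (bipartition B) i * mu (bipartition B i)
    = (i == 0%N)%:R * mu (bipartition B i).
  rewrite /tag_of; case: (cell_pointP (bipartition B) i) => [[p -> Bp] | [-> ->]] /=.
    by rewrite indicE; case: i Bp => [|i]; rewrite /bipartition /= => Bp;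
      [rewrite mem_set | rewrite memNset].
  by rewrite ba_set0 ?mulr0 //; case: hmu.
rewrite /riemann_sum !big_ord_recr big_ord0 /= !cell /=.
by rewrite add0r mul1r mul0r addr0.
Qed.

Lemma ba_int_cst mu (c : R) : pos_ba mu -> ba_int mu (fun _ => c) = c * mu setT.
Proof.
move=> hmu; transitivity (ba_int mu (fun p => c * \1_setT p + 0 * \1_setT p)).
  by congr ba_int; apply: funext => p; rewrite indicT /= mulr1 mul0r addr0.
by rewrite ba_int_lincomb ?ba_int_indic ?mul0r ?addr0 //; exact: bounded_indic.
Qed.

Lemma is_ba_integral_ba_int mu g : pos_ba mu -> bounded g ->
  is_ba_integral mu g (ba_int mu g).
Proof.
move=> hmu bg e e0; have muT1 : 0 < mu setT + 1 by have := hmu.2 setT; lra.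
exists (e / (mu setT + 1)) => [|s v s_part _ s_osc s_tag]; first exact: divr_gt0.
have := ba_int_riemann hmu (ltW (divr_gt0 e0 muT1)) s_part s_osc s_tag.
rewrite distrC => /le_trans; apply.
by rewrite mulrAC ler_pdivrMr //; have := hmu.2 setT; nra.
Qed.

Lemma is_ba_integral_unique mu g I : pos_ba mu -> bounded g ->
  is_ba_integral mu g I -> I = ba_int mu g.
Proof.
move=> hmu bg hI; have muT0 := hmu.2 setT.
apply/eqP; rewrite -subr_eq0; apply/eqP.
apply: (@eq0_norm_le_scaled _ _ (1 + mu setT)) => [|e e0]; first exact: addr_ge0.
have [delta delta0 hdelta] := hI e e0.
have min0 : 0 < Num.min delta e by rewrite lt_min delta0 e0.
have [n [P [Ppart Posc]]] := level_partition bg min0.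
have Posc_le e' : Num.min delta e <= e' -> osc_le g e' n P.
  by move=> le_e' i i_lt p q Pp Pq; exact: le_trans (Posc i i_lt p q Pp Pq) le_e'.
have seqE i : (i < n)%N ->
    nth set0 (mkseq P n) i = P i /\ nth 0 (mkseq (tag_of g P) n) i = tag_of g P i.
  by move=> i_lt; rewrite !nth_mkseq.
have hRI : `|riemann_sum mu n P (tag_of g P) - I| <= e.
  have := hdelta (mkseq P n) (mkseq (tag_of g P) n); rewrite !size_mkseq.
  have -> : \sum_(i < n) nth 0 (mkseq (tag_of g P) n) i * mu (nth set0 (mkseq P n) i)
      = riemann_sum mu n P (tag_of g P).
    by apply: eq_bigr => i _; have [-> ->] := seqE i (ltn_ord i).
  apply => //.
  - split => [i j | p].
      rewrite size_mkseq => i_lt j_lt.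
      by rewrite (seqE _ i_lt).1 (seqE _ j_lt).1; exact: Ppart.1.
    by have [i [i_lt Pp]] := Ppart.2 p; exists i; rewrite size_mkseq (seqE _ i_lt).1.
  - move=> i i_lt; rewrite (seqE _ i_lt).1.
    by apply: (Posc_le delta) => //; rewrite ge_min lexx.
  - move=> i i_lt; have [-> ->] := seqE _ i_lt.
    exact: tag_of_tagging.
have := ba_int_riemann hmu (ltW e0) Ppart (Posc_le _ _) (tag_of_tagging g n P).
rewrite ge_min lexx orbT => /(_ isT) hRint.
rewrite mulrDr mulr1 (_ : I - _ = (riemann_sum mu n P (tag_of g P) - ba_int mu g)
  - (riemann_sum mu n P (tag_of g P) - I)); last by ring.
rewrite distrC in hRint; apply: (le_trans (ler_normB _ _)); lra.
Qed.

Lemma ba_integralE mu g : pos_ba mu -> bounded g -> ba_integral mu g = ba_int mu g.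
Proof.
move=> hmu bg; apply: is_ba_integral_unique => //.
by apply: xgetPex; exists (ba_int mu g); exact: is_ba_integral_ba_int.
Qed.

Lemma ba_int_indic_lincomb mu (a b : R) A B : pos_ba mu ->
  ba_int mu (fun p => a * \1_A p + b * \1_B p) = a * mu A + b * mu B.
Proof. by move=> hmu; rewrite ba_int_lincomb ?ba_int_indic //; exact: bounded_indic. Qed.

Section PositiveFunctional.
Variable psi : (T -> R) -> R.
Hypothesis psi_lincomb : forall (a b : R) g h, bounded g -> bounded h ->
  psi (fun p => a * g p + b * h p) = a * psi g + b * psi h.
Hypothesis psi_le : forall g h, bounded g -> bounded h ->
  (forall p, g p <= h p) -> psi g <= psi h.

Let step n (c : nat -> R) P p := \sum_(i < n) c i * \1_(P i) p.

Lemma psi_cst0 : psi (fun _ => 0) = 0.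
Proof.
have := psi_lincomb 0 0 (bounded_cst 0) (bounded_cst 0).
by rewrite !mul0r !addr0.
Qed.

Lemma bounded_step n c P : bounded (step n c P).
Proof.
exists (\sum_(i < n) `|c i|) => p; apply: (le_trans (ler_norm_sum _ _ _)).
apply: ler_sum => i _; rewrite normrM indicE.
by case: (_ \in _); rewrite ?normr1 ?normr0 ?mulr1 ?mulr0.
Qed.

Lemma psi_step n c P : psi (step n c P) = \sum_(i < n) c i * psi \1_(P i).
Proof.
elim: n => [|n IH].
  rewrite big_ord0 -psi_cst0; congr psi; apply: funext => p.
  by rewrite /step big_ord0.
have -> : step n.+1 c P = fun p => 1 * step n c P p + c n * \1_(P n) p.
  by apply: funext => p; rewrite /step big_ord_recr /= mul1r.
by rewrite psi_lincomb ?IH ?mul1r ?big_ord_recr //; [exact: bounded_step | exact: bounded_indic].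
Qed.

Lemma step_cell n c P i p : is_partition n P -> (i < n)%N -> P i p -> step n c P p = c i.
Proof.
move=> [Pdisj _] i_lt Pp; rewrite /step (bigD1 (Ordinal i_lt)) //= big1 ?addr0.
  by rewrite indicE mem_set // mulr1.
move=> j /eqP ji; rewrite indicE memNset ?mulr0 // => Pj.
have ji' : (j : nat) <> i by move=> eji; apply: ji; apply: val_inj.
by have /seteqP[/(_ p (conj Pj Pp))] := Pdisj j i (ltn_ord j) i_lt ji'.
Qed.

Lemma functional_pos_ba : pos_ba (fun B => psi \1_B).
Proof.
have psi_indic_ge0 B : 0 <= psi \1_B.
  rewrite -psi_cst0; apply: psi_le; [exact: bounded_cst | exact: bounded_indic |].
  by move=> p; rewrite indicE ler0n.
split => //; split => [A B AB0 | ].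
  rewrite -[psi \1_A]mul1r -[psi \1_B]mul1r -psi_lincomb; try exact: bounded_indic.
  congr psi; apply: funext => p; rewrite !indicE in_setU !mul1r.
  case: (boolP (p \in A)) => [/set_mem Ap | _]; last by rewrite add0r.
  rewrite memNset ?addr0 // => Bp.
  by have : (A `&` B) p by []; rewrite AB0.
exists (psi (fun _ => 1)) => B; rewrite ger0_norm //.
apply: psi_le; [exact: bounded_indic | exact: bounded_cst |].
by move=> p; rewrite indicE; case: (_ \in _).
Qed.

Lemma ba_int_functional mu g : pos_ba mu -> (forall B, mu B = psi \1_B) -> bounded g ->
  ba_int mu g = psi g.
Proof.
move=> hmu muE bg; have muT0 := hmu.2 setT.
apply/eqP; rewrite -subr_eq0; apply/eqP.
apply: (@eq0_norm_le_scaled _ _ (2 * mu setT)) => [|e e0]; first exact: mulr_ge0.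
have [n [P [Ppart Posc]]] := level_partition bg e0.
set S := riemann_sum mu n P (tag_of g P).
have Sint := ba_int_riemann hmu (ltW e0) Ppart Posc (tag_of_tagging g n P).
have psi_shift (s : R) : psi (step n (fun i => tag_of g P i + s) P) = S + s * mu setT.
  rewrite psi_step (ba_partition_sum setT hmu.1 Ppart) mulr_sumr -big_split.
  by apply: eq_bigr => i _; rewrite setTI -muE mulrDl.
have near_step (s : R) p : exists2 i, (i < n)%N &
    step n (fun i => tag_of g P i + s) P p = tag_of g P i + s /\ `|g p - tag_of g P i| <= e.
  have [i [i_lt Pp]] := Ppart.2 p; exists i => //.
  by split; [exact: step_cell | exact: tag_of_near Posc i_lt Pp].
have psi_le_S : psi g <= S + e * mu setT.
  rewrite -psi_shift; apply: psi_le => [//|| p]; first exact: bounded_step.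
  by have [i _ [-> ]] := near_step e p; rewrite ler_norml => /andP[_]; lra.
have S_le_psi : S + - e * mu setT <= psi g.
  rewrite -psi_shift; apply: psi_le => [|// | p]; first exact: bounded_step.
  by have [i _ [-> ]] := near_step (- e) p; rewrite ler_norml => /andP[+ _]; lra.
move: Sint; rewrite -/S !ler_norml => /andP[Sint1 Sint2].
by apply/andP; split; lra.
Qed.

End PositiveFunctional.

End FinitelyAdditive.

Section HahnBanach.
Variables (R : realType) (T : Type).
Implicit Types (g h w : T -> R) (G : set ((T -> R) * R)).

Definition supf h := sup (range h).

Lemma supf_ub h p : bounded h -> h p <= supf h.
Proof.
move=> [K hK]; apply: ub_le_sup; last by exists p.
by exists K => _ [q _ <-]; apply: le_trans (ler_norm _) (hK q).
Qed.

Lemma supf_empty h : ~ (exists p : T, True) -> supf h = 0.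
Proof.
move=> T0; rewrite /supf (_ : range h = set0) ?sup0 //.
by apply/seteqP; split => // x [p _ _]; apply: T0; exists p.
Qed.

Lemma supf_le h (K : R) : 0 <= K -> (forall p, h p <= K) -> supf h <= K.
Proof.
move=> K0 hK; have [[p _] | T0] := pselect (exists p : T, True); last first.
  by rewrite supf_empty //.
by apply: ge_sup; [exists (h p), p | move=> _ [q _ <-]].
Qed.

Lemma supfD g h : bounded g -> bounded h ->
  supf (fun p => g p + h p) <= supf g + supf h.
Proof.
move=> bg bh; have [[p _] | T0] := pselect (exists p : T, True); last first.
  by rewrite !supf_empty ?addr0 //.
apply: ge_sup; first by exists (g p + h p), p.
by move=> _ [q _ <-]; apply: lerD; apply: supf_ub.
Qed.

Lemma supfZ (t : R) h : 0 < t -> bounded h -> supf (fun p => t * h p) = t * supf h.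
Proof.
move=> t0 bh; have [[p _] | T0] := pselect (exists p : T, True); last first.
  by rewrite !supf_empty ?mulr0 //.
have bth : bounded (fun p => t * h p).
  by have [K hK] := bh; exists (`|t| * K) => q; rewrite normrM; apply: ler_wpM2l.
apply/eqP; rewrite eq_le; apply/andP; split.
  apply: ge_sup; first by exists (t * h p), p.
  by move=> _ [q _ <-]; rewrite ler_pM2l //; exact: supf_ub.
rewrite -ler_pdivlMl //; apply: ge_sup; first by exists (h p), p.
by move=> _ [q _ <-]; rewrite ler_pdivlMl //; exact: supf_ub.
Qed.

Definition dominated_graph G :=
  [/\ (forall h c c', G (h, c) -> G (h, c') -> c = c'),
      (forall (a b : R) h1 c1 h2 c2, G (h1, c1) -> G (h2, c2) ->
          G ((fun p => a * h1 p + b * h2 p), a * c1 + b * c2)) &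
      (forall h c, G (h, c) -> bounded h /\ c <= supf h)].

Lemma dominated_graphZ G (a : R) w c : dominated_graph G -> G (w, c) ->
  G ((fun p => a * w p), a * c).
Proof.
move=> [_ G_lin _] Gw; have := G_lin a 0 _ _ _ _ Gw Gw.
rewrite mul0r addr0; congr (G (_, _)).
by apply: funext => p; rewrite mul0r addr0.
Qed.

Section OneStepExtension.
Variables (G : set ((T -> R) * R)) (h : T -> R).
Hypotheses (G_dom : dominated_graph G) (G0 : G (fun _ => 0, 0)) (bh : bounded h).

Definition graph_extend (c : R) := [set e | exists w Fw (t : R),
  G (w, Fw) /\ e = ((fun p => w p + t * h p), Fw + t * c)].

Lemma extension_value : exists c : R,
  (forall w Fw, G (w, Fw) -> Fw - supf (fun p => w p - h p) <= c) /\
  (forall w Fw, G (w, Fw) -> c <= supf (fun p => w p + h p) - Fw).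
Proof.
have [G_fun G_lin G_le] := G_dom.
have sep w Fw w' Fw' : G (w, Fw) -> G (w', Fw') ->
    Fw - supf (fun p => w p - h p) <= supf (fun p => w' p + h p) - Fw'.
  move=> Gw Gw'; have [bww' le_ww'] := G_le _ _ (G_lin 1 1 _ _ _ _ Gw Gw').
  have bw := (G_le _ _ Gw).1; have bw' := (G_le _ _ Gw').1.
  have := supfD (bounded_lincomb 1 (-1) bw bh) (bounded_lincomb 1 1 bw' bh).
  have -> : (fun p => 1 * w p + -1 * h p + (1 * w' p + 1 * h p)) =
            (fun p => 1 * w p + 1 * w' p) by apply: funext => p; ring.
  have -> : (fun p => 1 * w p + -1 * h p) = (fun p => w p - h p) by apply: funext => p; ring.
  have -> : (fun p => 1 * w' p + 1 * h p) = (fun p => w' p + h p) by apply: funext => p; ring.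
  lra.
pose S := [set x | exists w Fw, G (w, Fw) /\ x = Fw - supf (fun p => w p - h p)].
have S_ub w' Fw' : G (w', Fw') -> ubound S (supf (fun p => w' p + h p) - Fw').
  by move=> Gw' _ [w [Fw [Gw ->]]]; exact: sep.
have S0 : S (0 - supf (fun p => 0 - h p)) by exists (fun _ => 0), 0.
exists (sup S); split => [w Fw Gw | w' Fw' Gw'].
  by apply: ub_le_sup; [exists (supf (fun p => 0 + h p) - 0); exact: S_ub | exists w, Fw].
by apply: ge_sup; [exists (0 - supf (fun p => 0 - h p)) | exact: S_ub].
Qed.

Lemma graph_extend_functional c : ~ (exists c', G (h, c')) ->
  forall k c1 c2, graph_extend c (k, c1) -> graph_extend c (k, c2) -> c1 = c2.
Proof.
move=> h_new k c1 c2 [w1 [F1 [t1 [Gw1 [-> ->]]]]] [w2 [F2 [t2 [Gw2 [ek ->]]]]].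
have [G_fun G_lin _] := G_dom.
have ew p : w1 p + t1 * h p = w2 p + t2 * h p by rewrite (congr1 (@^~ p) ek).
have [et | net] := eqVneq t1 t2.
  have ew' : w1 = w2 by apply: funext => p; have := ew p; rewrite et; lra.
  have Gw12 : G (w1, F2) by rewrite ew'.
  by rewrite et (G_fun _ _ _ Gw1 Gw12).
case: h_new; exists ((t1 - t2)^-1 * F2 + (- (t1 - t2)^-1) * F1).
have dt : t1 - t2 != 0 by rewrite subr_eq0.
rewrite (_ : h = fun p => (t1 - t2)^-1 * w2 p + (- (t1 - t2)^-1) * w1 p); first exact: G_lin.
apply: funext => p; rewrite (_ : w2 p = w1 p + (t1 - t2) * h p); last by have := ew p; lra.
by field.
Qed.

Lemma graph_extend_le_supf c :
  (forall w Fw, G (w, Fw) -> Fw - supf (fun p => w p - h p) <= c) ->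
  (forall w Fw, G (w, Fw) -> c <= supf (fun p => w p + h p) - Fw) ->
  forall k c', graph_extend c (k, c') -> bounded k /\ c' <= supf k.
Proof.
move=> c_lo c_hi k c' [w [Fw [t [Gw [-> ->]]]]].
have [_ _ G_le] := G_dom; have bw := (G_le _ _ Gw).1.
split; first by have := bounded_lincomb 1 t bw bh; under eq_fun do rewrite mul1r.
have [t0 | t0 | <-] := ltgtP 0 t; last first.
  by rewrite mul0r addr0; under eq_fun do rewrite mul0r addr0; exact: (G_le _ _ Gw).2.
- have s0 : 0 < - t by rewrite oppr_gt0.
  have := c_lo _ _ (dominated_graphZ (- t)^-1 G_dom Gw).
  rewrite -(ler_pM2l s0) mulrBr mulrA mulfV ?gt_eqF // mul1r -supfZ //; last first.
    by have := bounded_lincomb (- t)^-1 (-1) bw bh; under eq_fun do rewrite mulN1r.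
  rewrite (_ : (fun p => _) = fun p => w p + t * h p); first lra.
  by apply: funext => p; rewrite mulrBr mulrA mulfV ?gt_eqF // mul1r; ring.
- have := c_hi _ _ (dominated_graphZ t^-1 G_dom Gw).
  rewrite -(ler_pM2l t0) mulrBr mulrA mulfV ?gt_eqF // mul1r -supfZ //; last first.
    by have := bounded_lincomb t^-1 1 bw bh; under eq_fun do rewrite mul1r.
  rewrite (_ : (fun p => _) = fun p => w p + t * h p); first lra.
  by apply: funext => p; rewrite mulrDr mulrA mulfV ?gt_eqF // mul1r.
Qed.

Lemma graph_extend_dominated c : ~ (exists c', G (h, c')) ->
  (forall w Fw, G (w, Fw) -> Fw - supf (fun p => w p - h p) <= c) ->
  (forall w Fw, G (w, Fw) -> c <= supf (fun p => w p + h p) - Fw) ->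
  dominated_graph (graph_extend c).
Proof.
move=> h_new c_lo c_hi; have [_ G_lin _] := G_dom.
split; [exact: graph_extend_functional | | exact: graph_extend_le_supf].
move=> a b k1 c1 k2 c2 [w1 [F1 [t1 [Gw1 [-> ->]]]]] [w2 [F2 [t2 [Gw2 [-> ->]]]]].
exists (fun p => a * w1 p + b * w2 p), (a * F1 + b * F2), (a * t1 + b * t2).
split; first exact: G_lin.
by congr (_, _); [apply: funext => p |]; ring.
Qed.

End OneStepExtension.

Lemma dominated_graph_bigcup G (F : set (set ((T -> R) * R))) : dominated_graph G ->
  (forall X, F X -> dominated_graph (X `|` G)) -> total_on F subset ->
  dominated_graph (\bigcup_(X in F) X `|` G).
Proof.
move=> G_dom FP Ftot; set U := \bigcup_(X in F) X.
have pair e1 e2 : (U `|` G) e1 -> (U `|` G) e2 ->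
    exists Y, [/\ dominated_graph Y, Y `<=` U `|` G, Y e1 & Y e2].
  have sub X : F X -> X `|` G `<=` U `|` G by move=> FX e [Xe | Ge]; [left; exists X | right].
  move=> [[X1 F1 e1X] | e1G] [[X2 F2 e2X] | e2G].
  - have [X12 | X21] := Ftot _ _ F1 F2.
    + by exists (X2 `|` G); split; [exact: FP | exact: sub | left; exact: X12 | left].
    + by exists (X1 `|` G); split; [exact: FP | exact: sub | left | left; exact: X21].
  - by exists (X1 `|` G); split; [exact: FP | exact: sub | left | right].
  - by exists (X2 `|` G); split; [exact: FP | exact: sub | right | left].
  - by exists G; split => // e Ge; right.
split.
- move=> h c c' e1 e2; have [Y [[Y_fun _ _] _ Y1 Y2]] := pair _ _ e1 e2.
  exact: Y_fun Y1 Y2.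
- move=> a b h1 c1 h2 c2 e1 e2; have [Y [[_ Y_lin _] YU Y1 Y2]] := pair _ _ e1 e2.
  exact/YU/Y_lin.
- by move=> h c e1; have [Y [[_ _ Y_le] _ Y1 _]] := pair _ _ e1 e1; exact: Y_le.
Qed.

Lemma hahn_banach_supf G : dominated_graph G -> G (fun _ => 0, 0) ->
  exists psi : (T -> R) -> R,
  [/\ forall (a b : R) g h, bounded g -> bounded h ->
        psi (fun p => a * g p + b * h p) = a * psi g + b * psi h,
      forall h, bounded h -> psi h <= supf h &
      forall h c, G (h, c) -> psi h = c].
Proof.
move=> G_dom G0.
have [A [PA A_max]] :=
  @Zorn_bigcup _ (fun X => dominated_graph (X `|` G)) (fun F => @dominated_graph_bigcup G F G_dom).
have [G_fun G_lin G_le] := PA; set Gm := A `|` G in G_fun G_lin G_le.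
have total h : bounded h -> exists c, Gm (h, c).
  move=> bh; apply: contrapT => h_new.
  have [c [c_lo c_hi]] := extension_value PA (or_intror G0) bh.
  have ext_dom := graph_extend_dominated PA bh h_new c_lo c_hi.
  have Gm_sub : Gm `<=` graph_extend Gm h c.
    move=> [k c'] Gk; exists k, c', 0; split => //.
    by congr (_, _); [apply: funext => p |]; rewrite mul0r addr0.
  apply: (A_max (graph_extend Gm h c)).
    split => [e Ae | sub]; first by apply: Gm_sub; left.
    apply: h_new; exists c; left; apply: sub; exists (fun _ => 0), 0, 1; split; first by right.
    by congr (_, _); [apply: funext => p |]; rewrite mul1r add0r.
  rewrite /= (_ : _ `|` G = graph_extend Gm h c) //.
  apply/seteqP; split => [e [// | Ge] | e Ee]; last by left.
  by apply: Gm_sub; right.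
pose psi h := xget 0 [set c | Gm (h, c)].
have psiP h : bounded h -> Gm (h, psi h) by move=> /total; exact: xgetPex.
have psiE h c : Gm (h, c) -> psi h = c.
  by move=> Gc; exact: G_fun (psiP _ (G_le _ _ Gc).1) Gc.
exists psi; split.
- by move=> a b g h bg bh; apply: psiE; apply: G_lin; apply: psiP.
- by move=> h bh; exact: (G_le _ _ (psiP h bh)).2.
- by move=> h c Gc; apply: psiE; right.
Qed.

Lemma supf_dominated_le (psi : (T -> R) -> R) g h :
  (forall (a b : R) g h, bounded g -> bounded h ->
     psi (fun p => a * g p + b * h p) = a * psi g + b * psi h) ->
  (forall h, bounded h -> psi h <= supf h) ->
  bounded g -> bounded h -> (forall p, g p <= h p) -> psi g <= psi h.
Proof.
move=> psi_lin psi_le bg bh gh.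
have := psi_le _ (bounded_lincomb 1 (-1) bg bh); rewrite psi_lin //.
have : supf (fun p => 1 * g p + -1 * h p) <= 0 by apply: supf_le => // p; have := gh p; lra.
lra.
Qed.

End HahnBanach.

Section Lipschitz.
Variables (R : realType) (M : Type) (d : M -> M -> R) (z : M).
Hypothesis hd : is_metric d.
Implicit Types (f g F : M -> R).

Lemma dist_ge0 x y : 0 <= d x y. Proof. by case: hd. Qed.
Lemma dist_xx x : d x x = 0. Proof. by case: hd => _ [/(_ x x) [_ ->]]. Qed.
Lemma distC x y : d x y = d y x. Proof. by case: hd => _ [_ []]. Qed.
Lemma dist_triangle x y w : d x w <= d x y + d y w. Proof. by case: hd => _ [_ [_]]. Qed.

Lemma dist_gt0 x y : x <> y -> 0 < d x y.
Proof.
move=> xy; rewrite lt_neqAle dist_ge0 andbT eq_sym; apply/eqP => dxy0.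
by case: hd => _ [/(_ x y) [/(_ dxy0)]].
Qed.

Definition lip1 F := forall x y, F x - F y <= d x y.

Let slopes f := [set r | exists x y, x <> y /\ r = `|f x - f y| / d x y].

Let lipnorm_no_slopes f : ~ (exists r, slopes f r) -> lipnorm d f = 0.
Proof.
move=> slopes0; rewrite /lipnorm -/(slopes f) (_ : slopes f = set0) ?sup0 //.
by apply/seteqP; split => // r fr; apply: slopes0; exists r.
Qed.

Let slopes_ub f : Lip0 d z f -> has_ubound (slopes f).
Proof. by move=> [_ [L fL]]; exists L => _ [u [v [uv ->]]]; rewrite ler_pdivrMr ?dist_gt0. Qed.

Lemma lipnorm_le f (K : R) : 0 <= K ->
  (forall x y, `|f x - f y| <= K * d x y) -> lipnorm d f <= K.
Proof.
move=> K0 fK; have [[r fr] | slopes0] := pselect (exists r, slopes f r); last first.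
  by rewrite lipnorm_no_slopes.
apply: ge_sup; first by exists r.
by move=> _ [x [y [xy ->]]]; rewrite ler_pdivrMr ?dist_gt0.
Qed.

Lemma lipnorm_ub f x y : Lip0 d z f -> `|f x - f y| <= lipnorm d f * d x y.
Proof.
move=> hf; have [-> | xy] := pselect (x = y); first by rewrite subrr normr0 dist_xx mulr0.
rewrite -ler_pdivrMr ?dist_gt0 //; apply: ub_le_sup; last by exists x, y.
exact: slopes_ub.
Qed.

Lemma lipnorm_ge0 f : Lip0 d z f -> 0 <= lipnorm d f.
Proof.
move=> hf; have [[r fr] | slopes0] := pselect (exists r, slopes f r); last first.
  by rewrite lipnorm_no_slopes.
have r0 : 0 <= r by case: fr => x [y [_ ->]]; exact: divr_ge0 (normr_ge0 _) (dist_ge0 x y).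
exact: le_trans r0 (ub_le_sup (slopes_ub hf) fr).
Qed.

Lemma BLip0_le_dist f x y : BLip0 d z f -> `|f x - f y| <= d x y.
Proof.
move=> [hf f1]; apply: le_trans (lipnorm_ub x y hf) _.
by rewrite -[leRHS]mul1r; apply: ler_wpM2r f1; exact: dist_ge0.
Qed.

Lemma BLip0_lip1 f : BLip0 d z f -> lip1 f.
Proof. by move=> hf x y; have := BLip0_le_dist x y hf; rewrite ler_norml => /andP[]. Qed.

Lemma lip1_BLip0 F : lip1 F -> BLip0 d z (fun x => F x - F z).
Proof.
move=> hF; have hF' x y : `|(F x - F z) - (F y - F z)| <= 1 * d x y.
  rewrite mul1r ler_norml; have := hF x y; have := hF y x; rewrite distC.
  by move=> *; apply/andP; split; lra.
by split; [split; [rewrite subrr | exists 1] | exact: lipnorm_le].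
Qed.

Lemma Lip0_lincomb (a b : R) f g : Lip0 d z f -> Lip0 d z g ->
  Lip0 d z (fun x => a * f x + b * g x).
Proof.
move=> [f0 [L1 fL1]] [g0 [L2 gL2]]; split; first by rewrite f0 g0 !mulr0 addr0.
exists (`|a| * L1 + `|b| * L2) => x y.
have -> : a * f x + b * g x - (a * f y + b * g y) = a * (f x - f y) + b * (g x - g y) by ring.
apply: (le_trans (ler_normD _ _)); rewrite !normrM mulrDl -!mulrA.
by apply: lerD; apply: ler_wpM2l.
Qed.

Lemma normr_Phi_le f p : Lip0 d z f -> `|Phi d f p| <= lipnorm d f.
Proof.
case: p => [[x y] /= xy] hf; have dxy := dist_gt0 xy.
rewrite /Phi /= normrM [`|(d x y)^-1|]ger0_norm ?invr_ge0 ?dist_ge0 //.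
by rewrite ler_pdivrMr // lipnorm_ub.
Qed.

Lemma bounded_Phi f : Lip0 d z f -> bounded (Phi d f).
Proof. by move=> hf; exists (lipnorm d f) => p; exact: normr_Phi_le. Qed.

Lemma Phi_lincomb (a b : R) f g :
  Phi d (fun x => a * f x + b * g x) = (fun p => a * Phi d f p + b * Phi d g p).
Proof. by apply: funext => p; rewrite /Phi; ring. Qed.

Lemma Phi_subr F (c : R) : Phi d (fun x => F x - c) = Phi d F.
Proof. by apply: funext => p; rewrite /Phi opprB addrA subrK. Qed.

Lemma Phi_ge_neg1 F p : lip1 F -> -1 <= Phi d F p.
Proof.
case: p => [[x y] /= xy] hF; rewrite /Phi /= ler_pdivlMr ?dist_gt0 // mulN1r.
by have := hF y x; rewrite distC; lra.
Qed.

Lemma lip1_min F1 F2 : lip1 F1 -> lip1 F2 -> lip1 (fun x => Num.min (F1 x) (F2 x)).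
Proof.
move=> hF1 hF2 x y; have := hF1 x y; have := hF2 x y.
have := ge_min (F1 x) (F1 x) (F2 x); have := ge_min (F2 x) (F1 x) (F2 x).
rewrite !lexx orbT /=.
by case: (leP (F1 y) (F2 y)) => Fy; lra.
Qed.

Lemma lip1_max F1 F2 : lip1 F1 -> lip1 F2 -> lip1 (fun x => Num.max (F1 x) (F2 x)).
Proof.
move=> hF1 hF2 x y; have := hF1 x y; have := hF2 x y.
have := le_max (F1 y) (F1 y) (F2 y); have := le_max (F2 y) (F1 y) (F2 y).
rewrite !lexx orbT /=.
by case: (leP (F1 x) (F2 x)) => Fx; lra.
Qed.

Lemma lip1_extension f (S : set M) (x0 u v : M) (g : R) :
  lip1 f -> S x0 -> 0 <= g <= 1 ->
  (forall x y, S x -> S y -> f x - f y + g * d u v <= d x u + d y v) ->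
  exists F, [/\ lip1 F, forall x, S x -> F x = f x & g * d u v <= F v - F u].
Proof.
move=> hf Sx0 /andP[g0 g1] fS.
pose E := [set f x - d x u | x in S].
have E_ub y : S y -> ubound E (f y + d y v - g * d u v).
  by move=> Sy _ [x Sx <-]; have := fS x y Sx Sy; lra.
pose a := sup E.
have a_ge x : S x -> f x - d x u <= a.
  move=> Sx; apply: ub_le_sup; last by exists x.
  by exists (f x0 + d x0 v - g * d u v); exact: E_ub.
have a_le y : S y -> a <= f y + d y v - g * d u v.
  by move=> Sy; apply: ge_sup; [exists (f x0 - d x0 u), x0 | exact: E_ub].
exists (fun w => Num.min (a + d u w) (Num.max (f w) (a + g * d u v - d v w))); split.
- apply: lip1_min => [x y | ]; first by have := dist_triangle u y x; rewrite (distC y x); lra.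
  by apply: lip1_max => // x y; have := dist_triangle v x y; lra.
- move=> x Sx; rewrite max_l; last by have := a_le x Sx; rewrite (distC v x); lra.
  by rewrite min_r //; have := a_ge x Sx; rewrite (distC u x); lra.
- rewrite !dist_xx addr0 subr0.
  set Fu := Num.min a _; set Fv := Num.min _ _.
  have Fu_le : Fu <= a by rewrite ge_min lexx.
  have Fv_ge : a + g * d u v <= Fv.
    rewrite le_min le_max lexx orbT andbT lerD2l.
    by have := ler_wpM2r (dist_ge0 u v) g1; rewrite mul1r.
  lra.
Qed.

Lemma lipnorm_le_supf_Phi f : Lip0 d z f -> lipnorm d f <= supf (Phi d f).
Proof.
move=> hf; have bPhi := bounded_Phi hf.
have [[x [y xy]] | M1] := pselect (exists x y : M, x <> y); last first.
  rewrite lipnorm_no_slopes ?supf_empty //; first by move=> [[[x y] xy] _]; apply: M1; exists x, y.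
  by move=> [_ [x [y [xy _]]]]; apply: M1; exists x, y.
have supf0 : 0 <= supf (Phi d f).
  pose pxy : Mt M := exist _ (x, y) xy; pose pyx : Mt M := exist _ (y, x) (nesym xy).
  have := supf_ub pxy bPhi; have := supf_ub pyx bPhi.
  by rewrite /Phi /= (distC y x); lra.
apply: lipnorm_le => // u v; have [-> | uv] := pselect (u = v).
  by rewrite subrr normr0 dist_xx mulr0.
pose puv : Mt M := exist _ (u, v) uv; pose pvu : Mt M := exist _ (v, u) (nesym uv).
have := supf_ub puv bPhi; have := supf_ub pvu bPhi; rewrite /Phi /= (distC v u).
rewrite !ler_pdivrMr ?dist_gt0 //; have := dist_gt0 uv.
by case: (lerP 0 (f u - f v)) => fuv; [rewrite ger0_norm | rewrite ltr0_norm]; lra.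
Qed.

End Lipschitz.

Section WitnessCondition.
Variables (R : realType) (M : Type) (d : M -> M -> R) (z : M).

Definition ld2p_witness (mu : set (Mt M) -> R) (gamma : R) :=
  exists A : set (Mt M), gamma <= mu A /\
  exists f g : M -> R, BLip0 d z f /\ BLip0 d z g /\
  exists u v : M, u <> v /\
  (forall p, A p -> gamma <= Phi d f p /\ gamma <= Phi d g p) /\
  (forall x y, pi_set A x -> pi_set A y ->
     Num.max (f x - f y) (g y - g x) + gamma * d u v <= d x u + d y v).

Definition optimal_measure_condition := forall mu : set (Mt M) -> R,
  is_ba mu -> optimal d z mu -> ba_norm mu = 1 ->
  forall gamma : R, 0 < gamma < 1 -> ld2p_witness mu gamma.

End WitnessCondition.

Section Forward.
Variables (R : realType) (M : Type) (d : M -> M -> R) (z : M).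
Hypothesis hd : is_metric d.
Local Notation T := (Mt M).
Implicit Types (mu : set T -> R) (f g : M -> R).

Lemma Phi_star_ba_int mu f : pos_ba mu -> Lip0 d z f ->
  Phi_star d mu f = ba_int mu (Phi d f).
Proof. by move=> hmu hf; rewrite /Phi_star ba_integralE //; exact: (bounded_Phi hd hf). Qed.

Lemma Phi_star_dual mu : pos_ba mu -> is_dual d z (Phi_star d mu).
Proof.
move=> hmu; split => [f g a b hf hg | ].
  rewrite !Phi_star_ba_int ?Phi_lincomb ?ba_int_lincomb //; last exact: Lip0_lincomb.
  - exact: (bounded_Phi hd hf).
  - exact: (bounded_Phi hd hg).
exists (mu setT) => f hf; rewrite Phi_star_ba_int // ler_norml.
have Phi_bd p : - lipnorm d f <= Phi d f p <= lipnorm d f.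
  by rewrite -ler_norml; exact: (normr_Phi_le hd p hf).
have bPhi := bounded_Phi hd hf.
rewrite mulrC -mulNr -!ba_int_cst //; apply/andP; split; apply: ba_int_le => //;
  try exact: bounded_cst.
- by move=> p; case/andP: (Phi_bd p).
- by move=> p; case/andP: (Phi_bd p).
Qed.

Lemma diam_gt_witness (S : set (M -> R)) (c : R) : 0 <= c -> c < diam_Lip d S ->
  exists f g u v, [/\ S f, S g, u <> v & c * d u v < (f u - g u) - (f v - g v)].
Proof.
move=> c0; rewrite /diam_Lip; set D := (X in sup X) => cD.
have [[r Dr] | D0] := pselect (exists r, D r); last first.
  by move: cD; rewrite (_ : D = set0) ?sup0; [lra | apply/seteqP; split => // r Dr; apply: D0; exists r].
have [_ [f [g [Sf [Sg ->]]]] c_lt] := sup_gt (ex_intro _ r Dr) cD.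
move: c_lt; rewrite /lipnorm; set sl := (X in sup X) => c_lt.
have [[s sls] | sl0] := pselect (exists s, sl s); last first.
  by move: c_lt; rewrite (_ : sl = set0) ?sup0; [lra | apply/seteqP; split => // s sls; apply: sl0; exists s].
have [_ [x [y [xy ->]]] c_lt'] := sup_gt (ex_intro _ s sls) c_lt.
rewrite ltr_pdivlMr ?(dist_gt0 hd) // in c_lt'.
have [fg_ge0 | fg_lt0] := lerP 0 ((f x - g x) - (f y - g y)).
  by exists f, g, x, y; rewrite ger0_norm in c_lt'.
exists f, g, y, x; split => //; first exact: nesym.
by rewrite ltr0_norm // (distC hd) in c_lt'; lra.
Qed.

Lemma slice_bad_set mu f (g al : R) : pos_ba mu -> mu setT = 1 ->
  slice d z (Phi_star d mu) al f -> (1 - g) * mu [set p | Phi d f p < g] < al.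
Proof.
move=> hmu muT [hf slice_f]; rewrite Phi_star_ba_int // in slice_f; last exact: hf.1.
set B := [set p | _].
have Phi_le p : Phi d f p <= g * \1_B p + 1 * \1_(~` B) p.
  rewrite !indicE; have [Bp | nBp] := pselect (B p).
    rewrite mem_set // memNset; last by apply.
    by rewrite mulr1 mulr0 addr0; exact: ltW.
  rewrite memNset // (@mem_set _ (~` B)) // mulr0 mulr1 add0r.
  by have := normr_Phi_le hd p hf.1; rewrite ler_norml => /andP[_ /le_trans]; apply; exact: hf.2.
have := ba_int_le hmu (bounded_Phi hd hf.1) (bounded_lincomb g 1 (bounded_indic B) (bounded_indic _)) Phi_le.
rewrite ba_int_indic_lincomb // mul1r.
have := ba_setC B hmu.1; rewrite muT; lra.
Qed.

Lemma far_pair_ineq f g u v (c : R) : lip1 d f -> lip1 d g ->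
  c * d u v <= f v - f u -> c * d u v <= g u - g v ->
  forall x y, Num.max (f x - f y) (g y - g x) + c * d u v <= d x u + d y v.
Proof.
move=> hf hg fuv guv x y; have := hf x u; have := hf v y; have := hg y v; have := hg u x.
rewrite (distC hd u x) (distC hd y v).
by case: (leP (f x - f y) (g y - g x)) => _; lra.
Qed.


Lemma LD2P_optimal_measure_condition : LD2P d z -> optimal_measure_condition d z.
Proof.
move=> LD mu hba [mu_ge0 dualn] normmu g /andP[g0 g1].
have hmu : pos_ba mu by [].
have muT : mu setT = 1 by rewrite -ba_norm_pos_ba.
(* This slice width makes both sets where a slope drops below g of measure < (1 - g) / 4. *)
pose al := (1 - g) * (1 - g) / 4; have al0 : 0 < al by rewrite divr_gt0 // mulr_gt0 // subr_gt0.
have diam2 := LD _ (Phi_star_dual hmu) (etrans dualn normmu) al al0.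
have [f1 [f2 [u [v [[bf1 sf1] [bf2 sf2] uv far]]]]] :
    exists f1 f2 u v, [/\ slice d z (Phi_star d mu) al f1, slice d z (Phi_star d mu) al f2,
      u <> v & (1 + g) * d u v < (f1 u - f2 u) - (f1 v - f2 v)].
  by apply: diam_gt_witness; rewrite ?diam2; lra.
have := BLip0_le_dist hd u v bf1; have := BLip0_le_dist hd u v bf2.
rewrite !ler_norml => /andP[f2uv1 f2uv2] /andP[f1uv1 f1uv2].
pose A := [set p | g <= Phi d f2 p /\ g <= Phi d f1 p].
have muA : g <= mu A.
  have := slice_bad_set g hmu muT (conj bf1 sf1); have := slice_bad_set g hmu muT (conj bf2 sf2).
  set B1 := [set p | Phi d f1 p < g]; set B2 := [set p | Phi d f2 p < g] => muB2 muB1.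
  have notA : ~` A `<=` B2 `|` B1.
    move=> p nAp; case: (ltP (Phi d f2 p) g) => [f2p | f2p]; first by left.
    by case: (ltP (Phi d f1 p) g) => [f1p | f1p]; [right | case: nAp].
  have small B : (1 - g) * mu B < al -> mu B < (1 - g) / 4.
    by rewrite /al -mulrA ltr_pM2l // subr_gt0.
  have := le_trans (pos_ba_le hmu notA) (pos_ba_subadditive _ _ hmu).
  have := ba_setC A hba; have := small _ muB1; have := small _ muB2; rewrite muT; lra.
exists A; split => //; exists f2, f1; do 2!split => //; exists u, v; split => //; split.
  by move=> p [].
rewrite mulrDl mul1r in far.
by move=> x y _ _; apply: (far_pair_ineq (BLip0_lip1 hd bf2) (BLip0_lip1 hd bf1)); lra.
Qed.

End Forward.

Section Backward.
Variables (R : realType) (M : Type) (d : M -> M -> R) (z : M).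
Hypothesis hd : is_metric d.
Local Notation T := (Mt M).
Implicit Types (phi : (M -> R) -> R) (mu : set T -> R) (f g F : M -> R).

Lemma BLip0_cst0 : BLip0 d z (fun _ => 0).
Proof.
split; first by split => //; exists 0 => x y; rewrite subrr normr0 mul0r.
by apply: (lipnorm_le hd) => // x y; rewrite subrr normr0 mul1r (dist_ge0 hd).
Qed.

Lemma normr_dual_le phi f : is_dual d z phi -> BLip0 d z f -> `|phi f| <= dualnorm d z phi.
Proof.
move=> [_ [C phiC]] hf; apply: ub_le_sup; last by exists f.
exists `|C| => _ [g hg <-]; apply: le_trans (phiC g hg.1) _.
apply: le_trans (ler_wpM2r (lipnorm_ge0 hd hg.1) (ler_norm C)) _.
by rewrite -[leRHS]mulr1; apply: ler_wpM2l hg.2.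
Qed.

Lemma dual_le_lipnorm phi f : is_dual d z phi -> Lip0 d z f ->
  phi f <= dualnorm d z phi * lipnorm d f.
Proof.
move=> hphi hf; have dn0 : 0 <= dualnorm d z phi.
  exact: le_trans (normr_ge0 _) (normr_dual_le hphi BLip0_cst0).
apply: (ler_addgt0Pr_scaled dn0) => e e0; pose L := lipnorm d f + e.
have L0 : 0 < L by have := lipnorm_ge0 hd hf; rewrite /L; lra.
have hfL : BLip0 d z (fun x => L^-1 * f x + 0 * f x).
  split; first exact: Lip0_lincomb.
  apply: (lipnorm_le hd) => // x y.
  rewrite (_ : _ - _ = L^-1 * (f x - f y)); last by ring.
  rewrite normrM gtr0_norm ?invr_gt0 // mul1r ler_pdivrMl //.
  apply: le_trans (lipnorm_ub hd x y hf) _; apply: ler_wpM2r; first exact: dist_ge0.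
  by rewrite /L lerDl; exact: ltW.
have := le_trans (ler_norm _) (normr_dual_le hphi hfL).
rewrite hphi.1 // mul0r addr0 ler_pdivrMl // => /le_trans; apply.
by rewrite /L mulrDl mulrC.
Qed.

Lemma Phi_inj f g : Lip0 d z f -> Lip0 d z g -> Phi d f = Phi d g -> f = g.
Proof.
move=> [f0 _] [g0 _] Phi_fg; apply: funext => x; have [-> | xz] := pselect (x = z).
  by rewrite f0 g0.
have := congr1 (@^~ (exist _ (x, z) xz : T)) Phi_fg.
rewrite /Phi /= f0 g0 !subr0 => /mulIf; apply.
by rewrite invr_eq0 gt_eqF // (dist_gt0 hd).
Qed.

Definition dual_graph phi := [set e | exists f, Lip0 d z f /\ e = (Phi d f, phi f)].

Lemma dual_graph_dominated phi : is_dual d z phi -> dualnorm d z phi = 1 ->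
  dominated_graph (dual_graph phi).
Proof.
move=> hphi dn1; split.
- move=> h c c' [f [hf [-> ->]]] [g [hg [/(Phi_inj hf hg) -> ->]]].
  by [].
- move=> a b h1 c1 h2 c2 [f [hf [-> ->]]] [g [hg [-> ->]]].
  by exists (fun x => a * f x + b * g x); rewrite Phi_lincomb hphi.1 //; split => //; exact: Lip0_lincomb.
- move=> h c [f [hf [-> ->]]]; split; first exact: (bounded_Phi hd hf).
  by apply: le_trans (lipnorm_le_supf_Phi hd hf); have := dual_le_lipnorm hphi hf; rewrite dn1 mul1r.
Qed.

Lemma dual_graph0 phi : is_dual d z phi -> dual_graph phi (fun _ => 0, 0).
Proof.
move=> hphi; have L0 := BLip0_cst0.1; exists (fun _ => 0); split => //.
rewrite (_ : Phi d _ = fun _ => 0); last by apply: funext => p; rewrite /Phi subrr mul0r.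
by have := hphi.1 _ _ 0 0 L0 L0; rewrite !mul0r addr0 => ->.
Qed.

Lemma dominated_extension_cst1 phi (psi : (T -> R) -> R) : dualnorm d z phi = 1 ->
  (forall (a b : R) (g h : T -> R), bounded g -> bounded h ->
     psi (fun p => a * g p + b * h p) = a * psi g + b * psi h) ->
  (forall h, bounded h -> psi h <= supf h) ->
  (forall f, Lip0 d z f -> psi (Phi d f) = phi f) ->
  psi (fun _ => 1) = 1.
Proof.
move=> dn1 psi_lin psi_le psi_Phi; apply/eqP; rewrite eq_le; apply/andP; split.
  by apply: le_trans (psi_le _ (bounded_cst 1)) _; apply: supf_le.
apply/ler_addgt0Pr => e e0.
have E0 : [set `|phi f| | f in BLip0 d z] !=set0.
  by exists `|phi (fun _ => 0)|, (fun _ => 0); first exact: BLip0_cst0.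
have dn_gt : 1 - e < dualnorm d z phi by rewrite dn1; lra.
have [_ [f hf <-]] := sup_gt E0 dn_gt.
have bPhi := bounded_Phi hd hf.1.
have Phi1 p : - 1 <= Phi d f p <= 1.
  by rewrite -ler_norml; apply: le_trans (normr_Phi_le hd p hf.1) hf.2.
have psi_le1 : psi (Phi d f) <= psi (fun _ => 1).
  apply: supf_dominated_le => //; first exact: bounded_cst.
  by move=> p; case/andP: (Phi1 p).
have psi_ge1 : psi (fun p => -1 * Phi d f p + 0 * Phi d f p) <= psi (fun _ => 1).
  apply: supf_dominated_le => //; [exact: bounded_lincomb | exact: bounded_cst |].
  by move=> p; case/andP: (Phi1 p); lra.
rewrite psi_lin // mul0r addr0 mulN1r in psi_ge1.
rewrite -(psi_Phi _ hf.1); case: (lerP 0 (psi (Phi d f))) => [s | s];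
  [rewrite ger0_norm | rewrite ltr0_norm]; lra.
Qed.

Lemma dual_representing_measure phi : is_dual d z phi -> dualnorm d z phi = 1 ->
  exists mu, [/\ pos_ba mu, mu setT = 1 & forall f, Lip0 d z f -> Phi_star d mu f = phi f].
Proof.
move=> hphi dn1.
have [psi [psi_lin psi_le psi_ext]] :=
  hahn_banach_supf (dual_graph_dominated hphi dn1) (dual_graph0 hphi).
have psi_mono (g h : T -> R) : bounded g -> bounded h -> (forall p, g p <= h p) -> psi g <= psi h.
  exact: supf_dominated_le.
have psi_Phi f : Lip0 d z f -> psi (Phi d f) = phi f.
  by move=> hf; apply: psi_ext; exists f.
pose mu B := psi \1_B.
have hmu : pos_ba mu := functional_pos_ba psi_lin psi_mono.
exists mu; split => //.
  by rewrite /mu indicT; exact: dominated_extension_cst1 dn1 psi_lin psi_le psi_Phi.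
move=> f hf; rewrite (Phi_star_ba_int hd hmu hf) -psi_Phi //.
exact: (ba_int_functional psi_lin psi_mono hmu (fun B => erefl) (bounded_Phi hd hf)).
Qed.

Lemma representing_measure_optimal mu phi : pos_ba mu -> mu setT = 1 ->
  (forall f, Lip0 d z f -> Phi_star d mu f = phi f) -> dualnorm d z phi = 1 ->
  optimal d z mu /\ ba_norm mu = 1.
Proof.
move=> hmu muT Phi_phi dn1; rewrite ba_norm_pos_ba // muT; split => //; split; first exact: hmu.2.
rewrite ba_norm_pos_ba // muT -dn1; congr sup; apply: eq_imagel => f hf.
by rewrite Phi_phi //; exact: hf.1.
Qed.

Lemma slice_of_witness mu F A (gamma al : R) : pos_ba mu -> mu setT = 1 -> lip1 d F ->
  0 <= gamma <= 1 -> 1 - gamma < al / 3 ->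
  gamma <= mu A -> (forall p, A p -> gamma <= Phi d F p) ->
  slice d z (Phi_star d mu) al (fun x => F x - F z).
Proof.
move=> hmu muT hF /andP[g0 g1] g_al muA PhiA; have bF := lip1_BLip0 z hd hF.
split => //; rewrite (Phi_star_ba_int hd hmu bF.1) Phi_subr.
have PhiF_ge p : gamma * \1_A p + -1 * \1_(~` A) p <= Phi d F p.
  rewrite !indicE; have [Ap | nAp] := pselect (A p).
    rewrite mem_set // memNset; last by apply.
    by rewrite mulr1 mulr0 addr0; exact: PhiA.
  rewrite memNset // (@mem_set _ (~` A)) // mulr0 mulr1 add0r.
  exact: (Phi_ge_neg1 hd).
have bPhiF : bounded (Phi d F) by rewrite -(Phi_subr d F (F z)); exact: (bounded_Phi hd bF.1).
have := ba_int_le hmu (bounded_lincomb _ _ (bounded_indic A) (bounded_indic _)) bPhiF PhiF_ge.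
rewrite ba_int_indic_lincomb //.
have := ba_setC A hmu.1; rewrite muT.
have : (1 - gamma) * (2 + gamma) <= (1 - gamma) * 3 by apply: ler_wpM2l; lra.
have : gamma * gamma <= gamma * mu A by exact: ler_wpM2l.
lra.
Qed.

Lemma Phi_eq_on_pi_set (A : set T) F f p : (forall x, pi_set A x -> F x = f x) -> A p ->
  Phi d F p = Phi d f p.
Proof.
move=> Ff Ap; case: p Ap => [[x y] xy] Ap; rewrite /Phi /= !Ff //.
- by exists x, (exist _ (x, y) xy) => //; right.
- by exists y, (exist _ (x, y) xy) => //; left.
Qed.

Lemma witness_slice_pair mu (gamma al : R) : pos_ba mu -> mu setT = 1 ->
  0 < gamma < 1 -> 1 - gamma < al / 3 ->
  ld2p_witness d z mu gamma ->
  exists f g, [/\ slice d z (Phi_star d mu) al f, slice d z (Phi_star d mu) al g &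
    2 * gamma <= lipnorm d (fun x => f x - g x)].
Proof.
move=> hmu muT /andP[g0 g1] g_al [A [muA [f [g [bf [bg [u [v [uv [PhiA far]]]]]]]]]].
have g01 : 0 <= gamma <= 1 by rewrite !ltW.
have [p0 Ap0] : exists p, A p.
  apply: contrapT => A0; move: muA; rewrite (_ : A = set0) ?ba_set0; first lra.
  - exact: hmu.1.
  - by apply/seteqP; split => // p Ap; apply: A0; exists p.
have piA0 : pi_set A (sval p0).1 by exists (sval p0).2, p0 => //; left; case: (sval p0).
have far_f x y : pi_set A x -> pi_set A y -> f x - f y + gamma * d u v <= d x u + d y v.
  by move=> Ax Ay; apply: le_trans (far x y Ax Ay); rewrite lerD2r le_max lexx.
have far_g x y : pi_set A x -> pi_set A y ->
    (- g x) - (- g y) + gamma * d u v <= d x u + d y v.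
  by move=> Ax Ay; apply: le_trans (far x y Ax Ay); rewrite lerD2r le_max opprK addrC lexx orbT.
have lip1_g' : lip1 d (fun x => - g x).
  by move=> x y; have := BLip0_lip1 hd bg y x; rewrite (distC hd); lra.
have [F [hF FA Fuv]] := lip1_extension hd (BLip0_lip1 hd bf) piA0 g01 far_f.
have [H [hH HA Huv]] := lip1_extension hd lip1_g' piA0 g01 far_g.
have hG : lip1 d (fun x => - H x) by move=> x y; have := hH y x; rewrite (distC hd); lra.
have GA x : pi_set A x -> - H x = g x by move=> Ax; rewrite HA ?opprK.
have sF : slice d z (Phi_star d mu) al (fun x => F x - F z).
  apply: (slice_of_witness hmu muT hF g01 g_al muA) => p Ap.
  by rewrite (Phi_eq_on_pi_set FA Ap); exact: (PhiA p Ap).1.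
have sG : slice d z (Phi_star d mu) al (fun x => - H x - - H z).
  apply: (slice_of_witness hmu muT hG g01 g_al muA) => p Ap.
  by rewrite (Phi_eq_on_pi_set GA Ap); exact: (PhiA p Ap).2.
exists (fun x => - H x - - H z), (fun x => F x - F z); split => //.
have duv := dist_gt0 hd uv.
have Lip0_GF : Lip0 d z (fun x => (- H x - - H z) - (F x - F z)).
  have := Lip0_lincomb 1 (-1) sG.1.1 sF.1.1.
  by under eq_fun do rewrite mul1r mulN1r.
rewrite -(ler_pM2r duv); apply: le_trans (lipnorm_ub hd u v Lip0_GF).
by apply: le_trans (ler_norm _); lra.
Qed.

Lemma optimal_measure_condition_LD2P : optimal_measure_condition d z -> LD2P d z.
Proof.
move=> cond phi hphi dn1 al al0.
have [mu [hmu muT Phi_phi]] := dual_representing_measure hphi dn1.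
have [opt normmu] := representing_measure_optimal hmu muT Phi_phi dn1.
apply: sup_eq_approx => [_ [f [g [[bf _] [[bg _] ->]]]] | e e0].
  apply: (lipnorm_le hd) => // x y.
  have := BLip0_le_dist hd x y bf; have := BLip0_le_dist hd x y bg.
  have -> : f x - g x - (f y - g y) = (f x - f y) - (g x - g y) by ring.
  by move=> *; apply: le_trans (ler_normB _ _) _; lra.
(* gamma := 1 - m / 2 is close enough to 1 for the witness to land in the slice. *)
pose m := Num.min (Num.min (al / 3) e) 1.
have m0 : 0 < m by rewrite !lt_min ltr01 e0 divr_gt0.
have [mal me m1] : [/\ m <= al / 3, m <= e & m <= 1].
  by rewrite !ge_min !lexx !orbT.
have g01 : 0 < 1 - m / 2 < 1 by apply/andP; split; lra.
have g_al : 1 - (1 - m / 2) < al / 3 by lra.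
have [f [g [sf sg le_fg]]] :=
  witness_slice_pair hmu muT g01 g_al (cond mu hmu.1 opt normmu _ g01).
have slice_phi k : slice d z (Phi_star d mu) al k -> slice d z phi al k.
  by move=> [bk sk]; split; rewrite // -Phi_phi //; exact: bk.1.
have [sf' sg'] := (slice_phi f sf, slice_phi g sg).
by exists (lipnorm d (fun x => f x - g x)); [exists f, g | lra].
Qed.

End Backward.



Unset Implicit Arguments.

Theorem proposition3p4 (R : realType) (M : Type) (d : M -> M -> R) (z : M)
  (hd : is_metric d) :
  LD2P d z <->
  (forall mu : set (Mt M) -> R, is_ba mu -> optimal d z mu -> ba_norm mu = 1 ->
   forall gamma : R, 0 < gamma < 1 ->
   exists A : set (Mt M), gamma <= mu A /\
   exists f g : M -> R, BLip0 d z f /\ BLip0 d z g /\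
   exists u v : M, u <> v /\
   (forall p, A p -> gamma <= Phi d f p /\ gamma <= Phi d g p) /\
   (forall x y, pi_set A x -> pi_set A y ->
      Num.max (f x - f y) (g y - g x) + gamma * d u v <= d x u + d y v)).
Proof.
split; [exact: LD2P_optimal_measure_condition | exact: optimal_measure_condition_LD2P].
Qed.
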